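(* Let $\mathcal{T} = \{T_1, \ldots, T_t\}$ be a set of unrooted binary phylogenetic trees on a common leaf set $X$, let $\mathcal{Q}$ be the set of quartets that are incompatible quartets of $T_1$ and $T_i$ for some $2 \le i \le t$, and let $\tilde x$ be an optimal solution of the linear program $$\text{minimize } \sum_{e \in E(T_1)} x_e \quad \text{s.t. } \sum_{e \in L(Q)} x_e \ge 1 \ \ \forall Q \in \mathcal{Q}, \qquad x_e \ge 0\ \ \forall e \in E(T_1).$$ Let $E \subseteq E(T_1)$ be the edge set produced by the following rounding procedure. Root $T_1$ at an arbitrary leaf $r$; for each edge $e$ let $u_e$ be its endpoint on the path from $r$ to the other endpoint $v_e$. Start with $E = \emptyset$. For the current $E$ and each edge $e$, let $D(e)$ be the set of edges $f$ such that $v_e$ lies on the path from $r$ to $v_f$ and the path from $v_e$ to $v_f$ contains no edge of $E$, and let $w(e) = \sum_{f \in D(e)} \tilde x_f$. While there exists an edge $e$ with $w(e) \ge 1/4$ and $w(f) < 1/4$ for all $f \in D(e) \setminus \{e\}$, add one such edge $e$ to $E$ (recomputing $D$ and $w$ afterwards); stop when every edge $e \in E(T_1) \setminus E$ has $w(e) < 1/4$. Then the final set $E$ is a feasible solution of the integer program $$\text{minimize } \sum_{e \in E(T_1)} x_e \quad \text{s.t. } \sum_{e \in L(Q)} x_e \ge 1 \ \ \forall Q \in \mathcal{Q}, \qquad x_e \in \{0,1\}\ \ \forall e \in E(T_1),$$ i.e., $L(Q) \cap E \ne \emptyset$ for every $Q \in \mathcal{Q}$.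
   Context: A (binary) phylogenetic tree on a finite set $X$ is an unrooted tree whose internal vertices have degree 3 and whose leaves are bijectively labelled by $X$. Two phylogenetic trees on $X$ are isomorphic ($\cong$) if there is a graph isomorphism between them fixing every leaf label. For $Y \subseteq X$, $T[Y]$ is the minimal subtree of $T$ connecting the leaves in $Y$, and $T|_Y$ is obtained from $T[Y]$ by suppressing all degree-2 vertices. A quartet is a 4-element subset of $X$; for $Q=\{a,b,c,d\}$, $ab|cd$ is the tree on $Q$ where $a,b$ share a neighbour $u$, $c,d$ share a neighbour $v$, and $u,v$ are adjacent. If $T_1|_Q \cong ab|cd$, $L(Q)$ is the set of edges of $T_1[\{a,b\}] \cup T_1[\{c,d\}]$. $Q$ is an incompatible quartet of $T_1,T_i$ if $T_1|_Q \not\cong T_i|_Q$. A $0/1$ vector $x$ is identified with the edge set $\{e : x_e = 1\}$. *)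

From HB Require Import structures.
From mathcomp Require Import all_boot all_order all_algebra.
From mathcomp Require Import boolp reals.

Set Implicit Arguments.
Unset Strict Implicit.
Unset Printing Implicit Defensive.

Import Order.TTheory GRing.Theory Num.Theory.

Record phylo (X : finType) := Phylo {
  pV : finType;
  padj : rel pV;
  plab : X -> pV;
  padj_sym : symmetric padj;
  padj_irr : irreflexive padj;
  pconn : forall u v : pV, exists p, path padj u p /\ last u p = v;
  pacyc : forall (u : pV) (p : seq pV),
      ~ [/\ uniq (u :: p), 2 <= size p, path padj u p & padj (last u p) u];
  plab_inj : injective plab;
  pdeg_leaf : forall v, v \in codom plab -> #|[pred w | padj v w]| <= 1;
  pdeg_int : forall v, v \notin codom plab -> #|[pred w | padj v w]| = 3
}.

Section TreeNotions.
Variables (X : finType) (T : phylo X).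
Local Notation V := (pV T).
Local Notation adj := (@padj X T).
Local Notation lab := (@plab X T).

Definition tpath (u v : V) (p : seq V) : Prop :=
  [/\ path adj u p, last u p = v & uniq (u :: p)].

Definition on_path (w u v : V) : Prop :=
  exists p, tpath u v p /\ w \in u :: p.

(* edges are the 2-element vertex sets {u,v} with u adjacent to v *)
Definition path_edges (u : V) (p : seq V) : seq {set V} :=
  [seq [set z.1; z.2] | z <- zip (u :: p) p].

Definition edge_on_path (e : {set V}) (u v : V) : Prop :=
  exists p, tpath u v p /\ e \in path_edges u p.

Definition is_edge (e : {set V}) : bool :=
  [exists u, exists v, adj u v && (e == [set u; v])].

Definition edges : {set {set V}} := [set e | is_edge e].

Definition span_v (Y : {set X}) (w : V) : Prop :=
  exists a b, [/\ a \in Y, b \in Y & on_path w (lab a) (lab b)].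

Definition span_e (Y : {set X}) (e : {set V}) : Prop :=
  exists a b, [/\ a \in Y, b \in Y & edge_on_path e (lab a) (lab b)].

Definition span_nb (Y : {set X}) (w w' : V) : Prop := span_e Y [set w; w'].

Definition span_deg2 (Y : {set X}) (w : V) : Prop :=
  exists n1 n2, [/\ n1 != n2, span_nb Y w n1, span_nb Y w n2 &
                    forall n, span_nb Y w n -> n = n1 \/ n = n2].

(* T|_Y : vertices of T[Y] of degree <> 2 in T[Y] ... *)
Definition kept (Y : {set X}) (w : V) : Prop := span_v Y w /\ ~ span_deg2 Y w.

(* ... two of them are adjacent in T|_Y iff the path between them in T has
   all its interior vertices suppressed (degree 2 in T[Y]). *)
Definition radj (Y : {set X}) (u v : V) : Prop :=
  [/\ kept Y u, kept Y v, u != v &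
      exists p, tpath u v p /\
        forall w, w \in behead (belast u p) -> ~ kept Y w].

End TreeNotions.

Arguments tpath {X} T u v p.
Arguments on_path {X} T w u v.
Arguments path_edges {X} T u p.
Arguments edge_on_path {X} T e u v.
Arguments is_edge {X} T e.
Arguments edges {X} T.
Arguments span_v {X} T Y w.
Arguments span_e {X} T Y e.
Arguments span_nb {X} T Y w w'.
Arguments span_deg2 {X} T Y w.
Arguments kept {X} T Y w.
Arguments radj {X} T Y u v.

Definition restr_iso (X : finType) (T T' : phylo X) (Y : {set X}) : Prop :=
  exists f : pV T -> pV T',
  [/\ forall w, kept T Y w -> kept T' Y (f w),
      forall w1 w2, kept T Y w1 -> kept T Y w2 -> f w1 = f w2 -> w1 = w2,
      forall w', kept T' Y w' -> exists w, kept T Y w /\ f w = w',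
      forall w1 w2, kept T Y w1 -> kept T Y w2 ->
         (radj T Y w1 w2 <-> radj T' Y (f w1) (f w2))
    & forall x, x \in Y -> f (plab T x) = plab T' x].

(* The quartet tree ab|cd: leaves qa qb qc qd, inner vertices qu qv. *)
Inductive qvert := qa | qb | qc | qd | qu | qv.

Definition qadj (s t : qvert) : bool :=
  match s, t with
  | qa, qu | qu, qa | qb, qu | qu, qb
  | qc, qv | qv, qc | qd, qv | qv, qd
  | qu, qv | qv, qu => true
  | _, _ => false
  end.

Definition quartet_iso (X : finType) (T : phylo X) (a b c d : X) : Prop :=
  let Y := [set a; b; c; d] in
  exists g : pV T -> qvert,
  [/\ forall w1 w2, kept T Y w1 -> kept T Y w2 -> g w1 = g w2 -> w1 = w2,
      forall q, exists w, kept T Y w /\ g w = q,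
      forall w1 w2, kept T Y w1 -> kept T Y w2 ->
         (radj T Y w1 w2 <-> qadj (g w1) (g w2)),
      g (plab T a) = qa /\ g (plab T b) = qb
    & g (plab T c) = qc /\ g (plab T d) = qd].

Definition Lset (X : finType) (T1 : phylo X) (Q : {set X}) (e : {set pV T1}) : Prop :=
  exists a b c d, [/\ Q = [set a; b; c; d], quartet_iso T1 a b c d &
     edge_on_path T1 e (plab T1 a) (plab T1 b) \/
     edge_on_path T1 e (plab T1 c) (plab T1 d)].

(* Q is an incompatible quartet of T1 and some T_i, i = 2..t
   (the trees T_2..T_t are given as the family Ts : 'I_n -> phylo X) *)
Definition incompat (X : finType) (T1 : phylo X) (n : nat) (Ts : 'I_n -> phylo X)
  (Q : {set X}) : Prop :=
  #|Q| = 4 /\ exists i, ~ restr_iso T1 (Ts i) Q.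

Section LP.
Variables (R : realType) (X : finType) (T1 : phylo X) (Qs : {set X} -> Prop).
Local Notation V := (pV T1).
Local Open Scope ring_scope.

Definition LP_feasible (y : {set V} -> R) : Prop :=
  (forall e, e \in edges T1 -> 0 <= y e) /\
  (forall Q, Qs Q -> 1 <= \sum_(e in edges T1 | `[< Lset Q e >]) y e).

Definition LP_optimal (x : {set V} -> R) : Prop :=
  LP_feasible x /\
  forall y, LP_feasible y ->
    \sum_(e in edges T1) x e <= \sum_(e in edges T1) y e.

Variables (r : V) (x : {set V} -> R).

Definition lowend (e : {set V}) (v : V) : Prop :=
  v \in e /\ exists w, [/\ w \in e, w != v & on_path T1 w r v].

Definition inD (E : {set {set V}}) (e f : {set V}) : Prop :=
  is_edge T1 f /\
  exists ve vf, [/\ lowend e ve, lowend f vf, on_path T1 ve r vf &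
                   ~ exists g, g \in E /\ edge_on_path T1 g ve vf].

Definition wgt (E : {set {set V}}) (e : {set V}) : R :=
  \sum_(f in edges T1 | `[< inD E e f >]) x f.

Definition eligible (E : {set {set V}}) (e : {set V}) : Prop :=
  [/\ e \in edges T1, 1 / 4 <= wgt E e &
      forall f, inD E e f -> f != e -> wgt E f < 1 / 4].

Inductive reach : {set {set V}} -> Prop :=
  | reach0 : reach set0
  | reachS E e : reach E -> eligible E e -> reach (e |: E).

Definition round_final (E : {set {set V}}) : Prop :=
  reach E /\ forall e, e \in edges T1 -> e \notin E -> wgt E e < 1 / 4.

End LP.

Arguments LP_feasible {R X} T1 Qs y.
Arguments LP_optimal {R X} T1 Qs x.
Arguments lowend {X} T1 r e v.
Arguments inD {X} T1 r E e f.
Arguments wgt {R X} T1 r x E e.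
Arguments eligible {R X} T1 r x E e.
Arguments reach {R X} T1 r x _.
Arguments round_final {R X} T1 r x E.
Arguments Lset {X} T1 Q e.
Arguments incompat {X} T1 {n} Ts Q.

From HB Require Import structures.
From mathcomp Require Import all_boot all_order all_algebra.
From mathcomp Require Import boolp reals.
Import Order.TTheory GRing.Theory Num.Theory.

Set Implicit Arguments.
Unset Strict Implicit.
Unset Printing Implicit Defensive.

(* Suppose E meets no L(Q) for an incompatible quartet Q.  Cutting the path
   between two leaves of Q at one of its edges e shows that e is clear for one
   of the two leaves q: its lower endpoint is an ancestor of q and the path
   from there down to q avoids E.  All the clear edges of q lie in D(h) for
   the topmost one h, which is not in E, so by the stopping condition they
   carry LP weight below 1/4.  The four leaves of Q thus cover L(Q) with
   weight below 1, against the LP constraint of Q. *)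

Lemma cat_eq_prefix (T : Type) (a b s t : seq T) :
  a ++ s = b ++ t -> size a <= size b -> exists c, b = a ++ c.
Proof.
move=> eq_cat le_ab; exists (drop (size a) b).
have : take (size a) (a ++ s) = take (size a) (b ++ t) by rewrite eq_cat.
by rewrite take_size_cat // takel_cat // => {1}->; rewrite cat_take_drop.
Qed.

Section TreePaths.
Variables (X : finType) (T : phylo X).
Local Notation V := (pV T).
Local Notation adj := (@padj X T).

Lemma adj_sym (u v : V) : adj u v = adj v u.
Proof. exact: padj_sym. Qed.

Lemma adj_neq (u v : V) : adj u v -> u != v.
Proof. by apply: contraTneq => ->; rewrite padj_irr. Qed.

Lemma path_rev_belast (u : V) p :
  path adj u p -> path adj (last u p) (rev (belast u p)).
Proof. by rewrite rev_path; apply: sub_path => a b; rewrite adj_sym. Qed.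

Lemma last_rev_belast (u : V) p : last (last u p) (rev (belast u p)) = u.
Proof. by case: p => [|y s] //=; rewrite rev_cons last_rcons. Qed.

Lemma tpath_cons (u v y : V) p :
  tpath T u v (y :: p) -> adj u y /\ tpath T y v p.
Proof. by case=> /= /andP[uy yp] lp /andP[_ yp_uniq]. Qed.

Lemma tpath_cat (u v : V) p1 p2 : tpath T u v (p1 ++ p2) ->
  tpath T u (last u p1) p1 /\ tpath T (last u p1) v p2.
Proof.
case; rewrite cat_path last_cat => /andP[pth1 pth2] lst.
rewrite -cat_cons cat_uniq => /and3P[uniq1 disj uniq2]; split => //.
split => //=; rewrite uniq2 andbT; apply: contra disj => mem1.
by apply/hasP; exists (last u p1) => //; exact: mem_last.
Qed.

Lemma tpath_rev (u v : V) p : tpath T u v p ->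
  tpath T v u (rev (belast u p)).
Proof.
case=> pth <- uniq_p; split; [exact: path_rev_belast | exact: last_rev_belast |].
by rewrite -rev_rcons -lastI rev_uniq.
Qed.

Lemma mem_split_last (w u : V) p :
  w \in u :: p -> exists p1 p2, p = p1 ++ p2 /\ last u p1 = w.
Proof.
rewrite in_cons => /predU1P[->|]; first by exists [::], p.
by case/splitPr => p1 p2; exists (rcons p1 w), p2; rewrite cat_rcons last_rcons.
Qed.

Lemma first_mem_split (s t : seq V) : has (mem t) s ->
  exists a z b, [/\ s = a ++ z :: b, z \in t & forall w, w \in a -> w \notin t].
Proof.
elim: s => //= y s IHs.
have [yt _|ynt /IHs [a [z [b [-> zt a_t]]]]] := boolP (y \in t).
  by exists [::], y, s.
exists (y :: a), z, b; split => // w; rewrite in_cons.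
by case/predU1P => [->|/a_t].
Qed.

(* Two simple routes from u that first meet again at z close up into a cycle. *)
Lemma no_two_routes (u z : V) a b c d :
  path adj u (c ++ z :: d) -> path adj u (a ++ z :: b) ->
  uniq (u :: c ++ z :: d) -> uniq (u :: a ++ z :: b) ->
  (forall w, w \in a -> w \notin c ++ z :: d) ->
  (c != [::]) || (a != [::]) -> False.
Proof.
move=> pth_c pth_a uniq_c uniq_a a_out nonempty.
apply: (@pacyc X T u (c ++ z :: rev a)).
have pth_az : path adj u (rcons a z).
  by move: pth_a; rewrite cat_path rcons_path => /andP[-> /= /andP[-> _]].
have := path_rev_belast pth_az.
rewrite last_rcons belast_rcons rev_cons rcons_path => /andP[pth_rev a_u].
split.
- rewrite -cat_rcons -cat_cons cat_uniq rev_uniq; apply/and3P; split.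
  + by move: uniq_c; rewrite -cat_rcons -cat_cons cat_uniq => /andP[].
  + apply/hasPn => w; rewrite mem_rev => wa; rewrite in_cons mem_rcons negb_or.
    apply/andP; split.
      by apply: contraTneq uniq_a => <-; rewrite /= mem_cat wa.
    by apply: contra (a_out _ wa); rewrite !mem_cat !in_cons => /orP[|] ->;
      rewrite ?orbT.
  + by move: uniq_a => /= /andP[_]; rewrite cat_uniq => /andP[].
- by rewrite size_cat /= size_rev addnS ltnS addn_gt0 !lt0n !size_eq0.
- rewrite cat_path /= pth_rev andbT.
  by move: pth_c; rewrite cat_path => /andP[-> /= /andP[-> _]].
- by rewrite last_cat.
Qed.

Lemma tpath_uniq (u v : V) p p' : tpath T u v p -> tpath T u v p' -> p = p'.
Proof.
elim: p u p' => [|y p IHp] u [|y' p'] //.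
- case=> _ /= -> _ [_ lst /= /andP[u_out _]].
  by have := mem_last y' p'; rewrite [last _ _]lst (negbTE u_out).
- case=> _ lst /= /andP[u_out _] [_ /= eq_uv _].
  by have := mem_last y p; rewrite [last _ _]lst -eq_uv (negbTE u_out).
move=> tp tp'; have [_ tp1] := tpath_cons tp; have [_ tp1'] := tpath_cons tp'.
have [eq_y|neq_y] := eqVneq y y'; first by subst y'; rewrite (IHp _ _ tp1 tp1').
case: tp => pth lst uniq_p; case: tp' => pth' lst' uniq_p'.
have : has (mem (y :: p)) (y' :: p').
  apply/hasP; exists v; first by rewrite -lst'; exact: (mem_last y' p').
  by rewrite -lst; exact: (mem_last y p).
case/first_mem_split => a [z [b [def_p' zp a_out]]].
have [c [d def_p]] : exists c d, y :: p = c ++ z :: d.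
  by case/splitPr: zp => c d; exists c, d.
rewrite def_p in pth uniq_p a_out; rewrite def_p' in pth' uniq_p'.
exfalso; apply: (no_two_routes pth pth' uniq_p uniq_p' a_out).
move: def_p def_p'; case: c {pth uniq_p a_out} => [|? ?] //=.
case: a {pth' uniq_p'} => [|? ?] //= [eq_y _] [eq_y' _].
by move: neq_y; rewrite eq_y eq_y' eqxx.
Qed.

Lemma path_edges_cons (u y : V) p :
  path_edges T u (y :: p) = [set u; y] :: path_edges T y p.
Proof. by []. Qed.

Lemma path_edges_cat (u : V) p1 p2 :
  path_edges T u (p1 ++ p2) = path_edges T u p1 ++ path_edges T (last u p1) p2.
Proof.
by elim: p1 u => [|y p IHp] u //; rewrite cat_cons !path_edges_cons IHp.
Qed.

Lemma path_edgesP (u : V) p g : g \in path_edges T u p ->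
  exists p1 y p2, p = p1 ++ y :: p2 /\ g = [set last u p1; y].
Proof.
elim: p u => [|y p IHp] u //; rewrite path_edges_cons in_cons => /predU1P[->|].
  by exists [::], y, p.
by case/IHp => p1 [y' [p2 [-> ->]]]; exists (y :: p1), y', p2.
Qed.

Lemma path_edges_rev (u : V) p :
  path_edges T (last u p) (rev (belast u p)) = rev (path_edges T u p).
Proof.
elim: p u => [|y p IHp] u //=.
rewrite rev_cons -cats1 path_edges_cat last_rev_belast IHp path_edges_cons.
by rewrite rev_cons -cats1 /= setUC.
Qed.

Lemma rev_belast_cat (u y : V) p1 p2 :
  rev (belast u (p1 ++ y :: p2)) =
  rev (belast y p2) ++ last u p1 :: rev (belast u p1).
Proof. by rewrite belast_cat /= rev_cat rev_cons cat_rcons. Qed.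

End TreePaths.

Section RootPaths.
Variables (X : finType) (T : phylo X) (r : pV T).
Local Notation V := (pV T).
Local Notation adj := (@padj X T).

Definition root_pathb (v : V) (p : seq V) :=
  [&& path adj r p, last r p == v & uniq (r :: p)].

Lemma exists_root_path (v : V) : exists p, root_pathb v p.
Proof.
have [p [pth lst]] := pconn r v.
case/shortenP: pth lst => p' pth' uniq_p' _ lst; exists p'.
by rewrite /root_pathb pth' uniq_p' lst eqxx.
Qed.

Definition root_path (v : V) : seq V := xchoose (exists_root_path v).

Lemma root_pathP (v : V) : tpath T r v (root_path v).
Proof. by have /and3P[pth /eqP lst uniq_p] := xchooseP (exists_root_path v). Qed.

Lemma last_root_path (v : V) : last r (root_path v) = v.
Proof. by case: (root_pathP v). Qed.

Lemma mem_root_path (v : V) : v \in r :: root_path v.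
Proof. by rewrite -{1}(last_root_path v) mem_last. Qed.

Lemma tpath_root_path (v : V) p : tpath T r v p -> p = root_path v.
Proof. by move/tpath_uniq; apply; exact: root_pathP. Qed.

Lemma on_path_root (w v : V) : on_path T w r v -> w \in r :: root_path v.
Proof. by case=> p [/tpath_root_path <-]. Qed.

Lemma root_path_prefix (w v : V) : w \in r :: root_path v ->
  exists s, root_path v = root_path w ++ s /\ tpath T w v s.
Proof.
case/mem_split_last => p1 [p2 [def_p lst]].
have := root_pathP v; rewrite def_p => /tpath_cat; rewrite lst => -[tp1 tp2].
by exists p2; rewrite -(tpath_root_path tp1).
Qed.

Lemma adj_root_path (u v : V) : adj u v ->
  root_path v = rcons (root_path u) v \/ root_path u = rcons (root_path v) u.
Proof.
move=> uv; have [v_up|v_down] := boolP (v \in r :: root_path u).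
  right; have [s [-> tp]] := root_path_prefix v_up.
  suff -> : s = [:: u] by rewrite cats1.
  apply: tpath_uniq tp _; split => //=; first by rewrite adj_sym uv.
  by rewrite inE andbT eq_sym adj_neq.
left; symmetry; apply: tpath_root_path; case: (root_pathP u) => pth lst uniq_p.
split; last by rewrite -rcons_cons rcons_uniq v_down uniq_p.
  by rewrite rcons_path pth lst.
by rewrite last_rcons.
Qed.

Lemma root_path_descend (u y v : V) p : tpath T u v (y :: p) ->
  root_path y = rcons (root_path u) y -> root_path v = root_path y ++ p.
Proof.
elim: p u y => [|z p IHp] u y.
  by case=> _ /= -> _ _; rewrite cats0.
move=> tp down_y; have [uy tp1] := tpath_cons tp; have [yz tp2] := tpath_cons tp1.
have [down_z|up_y] := adj_root_path yz.
  by rewrite (IHp _ _ tp1 down_z) down_z cat_rcons.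
move: down_y; rewrite up_y => /rcons_inj [] eq_root.
have eq_uz : u = z by rewrite -(last_root_path u) -(last_root_path z) eq_root.
by case: tp => _ _ /= /andP[]; rewrite !inE eq_uz eqxx orbT.
Qed.

End RootPaths.

Section ClearEdges.
Variables (X : finType) (T : phylo X) (r : pV T) (E : {set {set pV T}}).
Local Notation V := (pV T).
Local Notation adj := (@padj X T).
Local Notation root_path := (root_path r).

Definition clear_edge (q : V) (e : {set V}) (ve : V) : Prop :=
  [/\ e \in edges T, e \notin E, lowend T r e ve, on_path T ve r q &
      ~ exists g, g \in E /\ edge_on_path T g ve q].

Lemma clear_edge_child (u v y : V) p1 p2 :
  tpath T u v (p1 ++ y :: p2) ->
  root_path y = rcons (root_path (last u p1)) y ->
  (forall g, g \in path_edges T u (p1 ++ y :: p2) -> g \notin E) ->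
  clear_edge v [set last u p1; y] y.
Proof.
move=> tp down_y clear_p; set x := last u p1.
have [_ tp2] := tpath_cat tp; have [xy tp3] := tpath_cons tp2.
have on_p : [set x; y] \in path_edges T u (p1 ++ y :: p2).
  by rewrite path_edges_cat mem_cat path_edges_cons in_cons eqxx orbT.
split.
- rewrite inE; apply/existsP; exists x; apply/existsP; exists y.
  by rewrite xy eqxx.
- exact: clear_p on_p.
- split; first by rewrite !inE eqxx orbT.
  exists x; split; first by rewrite !inE eqxx.
    by rewrite adj_neq.
  exists (root_path y); split; first exact: root_pathP.
  by rewrite down_y -rcons_cons mem_rcons in_cons mem_root_path orbT.
- exists (root_path v); split; first exact: root_pathP.
  by rewrite (root_path_descend tp2 down_y) -cat_cons mem_cat mem_root_path.
- case=> g [gE [p [/tpath_uniq/(_ tp3) -> g_p]]].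
  apply: (negP (clear_p g _)) => //.
  by rewrite path_edges_cat mem_cat path_edges_cons in_cons g_p !orbT.
Qed.

Lemma edge_on_clear_path (u v : V) e :
  (forall g, edge_on_path T g u v -> g \notin E) -> edge_on_path T e u v ->
  (exists ve, clear_edge u e ve) \/ (exists ve, clear_edge v e ve).
Proof.
move=> clear_uv [p [tp /path_edgesP [p1 [y [p2 [def_p ->]]]]]].
have clear_p g : g \in path_edges T u p -> g \notin E.
  by move=> g_p; apply: clear_uv; exists p.
set x := last u p1.
have xy : adj x y by move: tp; rewrite def_p => /tpath_cat [_ /tpath_cons []].
have [down_y|down_x] := adj_root_path r xy.
  right; exists y; rewrite def_p in tp clear_p.
  exact: clear_edge_child tp down_y clear_p.
left; exists x; rewrite setUC.
have lst_u : last u p = v by case: tp.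
have y_last : last v (rev (belast y p2)) = y.
  by rewrite -lst_u def_p last_cat /= last_rev_belast.
have := tpath_rev tp; rewrite def_p rev_belast_cat => tp_rev.
rewrite -{1}y_last; apply: clear_edge_child tp_rev _ _; first by rewrite y_last.
move=> g; rewrite -rev_belast_cat -def_p -{1}lst_u path_edges_rev mem_rev.
exact: clear_p.
Qed.

Lemma topmost_clear_edge (q : V) : (exists e ve, clear_edge q e ve) ->
  exists h, [/\ h \in edges T, h \notin E &
                forall e ve, clear_edge q e ve -> inD T r E h e].
Proof.
case=> e0 [v0 clear0].
pose depth n := `[< exists e ve, clear_edge q e ve /\ size (root_path ve) = n >].
have ex_depth : exists n, depth n.
  by exists (size (root_path v0)); apply/asboolP; exists e0, v0.
case: (ex_minnP ex_depth) => m /asboolP [h [vh [[hE hnE h_low vh_q vh_clear]]]].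
move=> <- {m} min_vh; exists h; split => // e ve.
move=> /[dup] clear_e [eE _ e_low ve_q _].
have [t def_ve] : exists t, root_path ve = root_path vh ++ t.
  have [s1 [def_q1 _]] := root_path_prefix (on_path_root vh_q).
  have [s2 [def_q2 _]] := root_path_prefix (on_path_root ve_q).
  apply: cat_eq_prefix (etrans (esym def_q1) def_q2) _.
  by apply: min_vh; apply/asboolP; exists e, ve.
have tp_t : tpath T vh ve t.
  have := root_pathP r ve; rewrite def_ve => /tpath_cat [].
  by rewrite last_root_path.
split; first by move: eE; rewrite inE.
exists vh, ve; split => //.
  exists (root_path ve); split; first exact: root_pathP.
  by rewrite def_ve -cat_cons mem_cat mem_root_path.
case=> g [gE [p [/tpath_uniq/(_ tp_t) -> g_t]]].
have [s [def_q _]] := root_path_prefix (on_path_root ve_q).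
apply: vh_clear; exists g; split => //; exists (t ++ s); split.
  have := root_pathP r q; rewrite def_q def_ve -catA => /tpath_cat [].
  by rewrite last_root_path.
by rewrite path_edges_cat mem_cat g_t.
Qed.

Lemma Lset_clear (Q : {set X}) e :
  (forall g, g \in E -> ~ Lset T Q g) -> Lset T Q e ->
  exists2 q, q \in Q & exists ve, clear_edge (plab T q) e ve.
Proof.
move=> E_out [a [b [c [d [def_Q qiso e_ab_cd]]]]].
have clear_side (a' b' : X) : a' \in Q -> b' \in Q ->
    (forall g, edge_on_path T g (plab T a') (plab T b') -> Lset T Q g) ->
    edge_on_path T e (plab T a') (plab T b') ->
  exists2 q, q \in Q & exists ve, clear_edge (plab T q) e ve.
- move=> a'Q b'Q L_ab e_ab.
  have clear_ab g : edge_on_path T g (plab T a') (plab T b') -> g \notin E.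
    by move/L_ab => Lg; apply/negP => /E_out.
  by case: (edge_on_clear_path clear_ab e_ab); [exists a' | exists b'].
have inQ : [/\ a \in Q, b \in Q, c \in Q & d \in Q].
  by rewrite def_Q !inE !eqxx !orbT.
case: inQ e_ab_cd => aQ bQ cQ dQ [e_ab|e_cd].
- by apply: clear_side e_ab => // g g_ab; exists a, b, c, d; split => //; left.
- by apply: clear_side e_cd => // g g_cd; exists a, b, c, d; split => //; right.
Qed.

End ClearEdges.

Local Open Scope ring_scope.

Lemma ler_sum_cover (R : numDomainType) (I J : finType) (D A : pred I)
    (K : pred J) (B : J -> pred I) (F : I -> R) :
  (forall i, D i -> 0 <= F i) ->
  (forall i, D i -> A i -> exists2 j, K j & B j i) ->
  \sum_(i | D i && A i) F i <= \sum_(j | K j) \sum_(i | D i && B j i) F i.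
Proof.
move=> F_ge0 cover; rewrite big_mkcondr.
under [X in _ <= X]eq_bigr do rewrite big_mkcondr.
rewrite exchange_big /=; apply: ler_sum => i Di.
have term_ge0 j : 0 <= if B j i then F i else 0.
  by case: ifP => // _; exact: F_ge0.
case: ifP => [Ai|_]; last exact: sumr_ge0.
have [j Kj Bji] := cover i Di Ai.
by rewrite (bigD1 j) //= Bji lerDl sumr_ge0.
Qed.

Lemma clear_weight_lt (R : realType) (X : finType) (T : phylo X) (r : pV T)
    (x : {set pV T} -> R) (E : {set {set pV T}}) (q : pV T) :
  (forall e, e \in edges T -> 0 <= x e) ->
  (forall e, e \in edges T -> e \notin E -> wgt T r x E e < 1 / 4) ->
  \sum_(e in edges T | `[< exists ve, clear_edge r E q e ve >]) x e < 1 / 4.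
Proof.
move=> x_ge0 stopped.
have [/topmost_clear_edge [h [hE hnE h_top]] | no_clear] :=
  pselect (exists e ve, clear_edge r E q e ve).
  apply: le_lt_trans (stopped h hE hnE); rewrite /wgt !big_mkcondr.
  apply: ler_sum => e eE; case: asboolP => [[ve /h_top /asboolT ->] // | _].
  by case: ifP => // _; exact: x_ge0.
rewrite big1 ?divr_gt0 // => e /andP[_ /asboolP [ve clear_e]].
by case: no_clear; exists e, ve.
Qed.

Theorem lemma5 (R : realType) (X : finType) (T1 : phylo X) (n : nat)
  (Ts : 'I_n -> phylo X) (xt : {set pV T1} -> R) (rho : X)
  (E : {set {set pV T1}}) :
  LP_optimal T1 (incompat T1 Ts) xt ->
  round_final T1 (plab T1 rho) xt E ->
  forall Q, incompat T1 Ts Q -> exists e, e \in E /\ Lset T1 Q e.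
Proof.
move=> [[xt_ge0 LP_Q] _] [_ stopped] Q incQ.
apply: contrapT => E_misses.
have E_out g : g \in E -> ~ Lset T1 Q g.
  by move=> gE Lg; apply: E_misses; exists g.
pose clear q e := `[< exists ve, clear_edge (plab T1 rho) E (plab T1 q) e ve >].
have cover_L : \sum_(e in edges T1 | `[< Lset T1 Q e >]) xt e <=
               \sum_(q in Q) \sum_(e in edges T1 | clear q e) xt e.
  apply: ler_sum_cover => // e _ /asboolP /(Lset_clear (plab T1 rho) E_out).
  by case=> q qQ clear_q; exists q => //; apply/asboolP.
have [four [q0 q0Q]] : #|Q| = 4%N /\ exists q0, q0 \in Q.
  by case: incQ => card_Q _; split => //; apply/card_gt0P; rewrite card_Q.
have clear_lt : \sum_(q in Q) \sum_(e in edges T1 | clear q e) xt e < 1.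
  rewrite -[1](_ : \sum_(q in Q) (1 / 4 : R) = 1); last first.
    by rewrite sumr_const four -[_ *+ 4]mulr_natr div1r mulVf // pnatr_eq0.
  apply: ltr_sum => [|q _]; last exact: clear_weight_lt.
  by apply/hasP; exists q0 => //; exact: mem_index_enum.
by have := le_lt_trans (le_trans (LP_Q Q incQ) cover_L) clear_lt; rewrite ltxx.
Qed.
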